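(* Let $K_1, K_2, K_3 > 0$ and $h_c \in (0,\infty)$, and set $L_j = K_j \tanh(K_j h_c)$ for $j=1,2,3$. Let $\Omega_1 = \sqrt{L_1}$, $\Omega_2 = \sqrt{L_2}$, $\Omega_3 = -\sqrt{L_3}$, and suppose $\Omega_1 + \Omega_2 + \Omega_3 = 0$. Define $$\beta = \sum_{l=1}^3 \Omega_l K_l^2 - \frac{1}{2}\Omega_1\Omega_2\Omega_3\big(\Omega_1^2 + \Omega_2^2 + \Omega_3^2\big).$$ Then $\beta < 0$.
   Context: Here $K_j$ are wavenumbers of three linear wave modes in a cylinder of depth $h_c$, $\Omega_j$ are signed angular frequencies satisfying the finite-depth dispersion relation $\Omega_j^2 = K_j\tanh(K_j h_c)$, and the condition $\Omega_1+\Omega_2+\Omega_3=0$ expresses exact triad resonance at depth $h_c$. The quantity $\beta$ enters the triad interaction coefficients $\alpha_j = \mathscr{C}\beta/(2\Omega_j)$. *)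

From Stdlib Require Import Reals.
Open Scope R_scope.

(* With f(k) = k tanh(k h_c) the resonance reads Ω₁² = f(K₁), Ω₂² = f(K₂),
   Ω₃² = f(K₃) with Ω₃ = -(Ω₁ + Ω₂).  Under this constraint
   ½ Ω₁Ω₂|Ω₃|(Ω₁² + Ω₂² + Ω₃²) = (Ω₁(Ω₃⁴ - Ω₁⁴) + Ω₂(Ω₃⁴ - Ω₂⁴)) / 5, so β < 0 as
   soon as Ω₃⁴ - Ω_j⁴ < 2 (K₃² - K_j²) for j = 1, 2.  This follows from
   0 < f(k) < k and 0 <= f' <= 2: the difference of squares f(K₃)² - f(K_j)²
   factors as (f(K₃) - f(K_j)) (f(K₃) + f(K_j)). *)

From Stdlib Require Import Reals Lra Psatz.
From Coquelicot Require Import Coquelicot.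
Open Scope R_scope.

Lemma exp_mul_exp_opp x : exp x * exp (- x) = 1.
Proof. now rewrite <- exp_plus, Rplus_opp_r, exp_0. Qed.

Lemma tanh_exp x : tanh x = (exp x - exp (- x)) / (exp x + exp (- x)).
Proof.
  unfold tanh, sinh, cosh.
  pose proof (exp_pos x); pose proof (exp_pos (- x)).
  field; lra.
Qed.

Lemma tanh_pos_lt_1 x : 0 < x -> 0 < tanh x < 1.
Proof.
  intros hx; rewrite tanh_exp.
  assert (hlt : exp (- x) < exp x) by (apply exp_increasing; lra).
  pose proof (exp_pos (- x)).
  split.
  - apply Rdiv_lt_0_compat; lra.
  - apply Rlt_div_l; lra.
Qed.

Lemma one_sub_tanh_sq x : 1 - tanh x ^ 2 = 4 / (exp x + exp (- x)) ^ 2.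
Proof.
  rewrite tanh_exp.
  pose proof (exp_pos x); pose proof (exp_pos (- x)).
  transitivity (4 * (exp x * exp (- x)) / (exp x + exp (- x)) ^ 2).
  - field; lra.
  - now rewrite exp_mul_exp_opp, Rmult_1_r.
Qed.

Lemma one_sub_tanh_sq_ge0 x : 0 <= 1 - tanh x ^ 2.
Proof.
  rewrite one_sub_tanh_sq.
  pose proof (exp_pos x); pose proof (exp_pos (- x)).
  apply Rdiv_le_0_compat; nra.
Qed.

(* (e^x + e^-x)² >= 4 e^x >= 4 (1 + x). *)
Lemma mul_one_sub_tanh_sq_le1 x : 0 <= x -> x * (1 - tanh x ^ 2) <= 1.
Proof.
  intros hx; rewrite one_sub_tanh_sq.
  assert (hE : 1 + x <= exp x).
  { destruct (Req_dec x 0) as [-> | hx0]; [rewrite exp_0; lra |].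
    left; apply exp_ineq1; lra. }
  pose proof (exp_pos (- x)); pose proof (exp_mul_exp_opp x).
  unfold Rdiv; rewrite <- Rmult_assoc.
  apply Rmult_le_reg_r with ((exp x + exp (- x)) ^ 2); [nra |].
  rewrite Rmult_assoc, Rinv_l; nra.
Qed.

Lemma tanh_nonneg_le1 x : 0 <= x -> 0 <= tanh x <= 1.
Proof.
  intros hx.
  destruct (Req_dec x 0) as [-> | hx0].
  - unfold tanh; rewrite sinh_0, cosh_0; lra.
  - pose proof (tanh_pos_lt_1 x); lra.
Qed.

Lemma dispersion_slope_bounds u : 0 <= u -> 0 <= tanh u + u * (1 - tanh u ^ 2) <= 2.
Proof.
  intros hu.
  pose proof (tanh_nonneg_le1 u hu).
  pose proof (one_sub_tanh_sq_ge0 u).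
  pose proof (mul_one_sub_tanh_sq_le1 u hu).
  split; nra.
Qed.

Lemma sqrt_pow4 x : 0 <= x -> sqrt x ^ 4 = x ^ 2.
Proof.
  intros hx.
  rewrite <- (sqrt_sqrt x hx) at 2.
  ring.
Qed.

Definition dispersion (h k : R) : R := k * tanh (k * h).

Lemma dispersion_pos_lt_id h k : 0 < h -> 0 < k -> 0 < dispersion h k < k.
Proof.
  intros hh hk; unfold dispersion.
  destruct (tanh_pos_lt_1 (k * h)) as [t0 t1]; [nra |].
  split; nra.
Qed.

Lemma is_derive_dispersion h k :
  is_derive (dispersion h) k (tanh (k * h) + k * h * (1 - tanh (k * h) ^ 2)).
Proof.
  unfold dispersion, tanh, sinh, cosh.
  pose proof (exp_pos (k * h)); pose proof (exp_pos (- (k * h))).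
  pose proof (exp_mul_exp_opp (k * h)).
  auto_derive; [lra | field; lra].
Qed.

Lemma dispersion_increment_bounds h x y : 0 < h -> 0 <= x -> x <= y ->
  0 <= dispersion h y - dispersion h x <= 2 * (y - x).
Proof.
  intros hh hx hxy.
  destruct (MVT_gen (dispersion h) x y
    (fun k => tanh (k * h) + k * h * (1 - tanh (k * h) ^ 2))) as [c [hc ->]].
  - intros k _; apply is_derive_dispersion.
  - intros k _; apply continuity_pt_filterlim, (ex_derive_continuous (dispersion h) k).
    eexists; apply is_derive_dispersion.
  - rewrite Rmin_left, Rmax_right in hc by lra.
    assert (hch : 0 <= c * h) by nra.
    pose proof (dispersion_slope_bounds (c * h) hch).
    split; nra.
Qed.

Lemma dispersion_lt_rev h x y : 0 < h -> 0 <= y ->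
  dispersion h x < dispersion h y -> x < y.
Proof.
  intros hh hy hlt.
  destruct (Rlt_or_le x y) as [| hyx]; [assumption |].
  pose proof (dispersion_increment_bounds h y x hh hy hyx); lra.
Qed.

Lemma dispersion_sq_sub_lt h x y : 0 < h -> 0 < x -> 0 < y ->
  dispersion h x < dispersion h y ->
  dispersion h y ^ 2 - dispersion h x ^ 2 < 2 * (y ^ 2 - x ^ 2).
Proof.
  intros hh hx hy hlt.
  pose proof (dispersion_lt_rev h x y hh (Rlt_le _ _ hy) hlt) as hxy.
  pose proof (dispersion_increment_bounds h x y hh (Rlt_le _ _ hx) (Rlt_le _ _ hxy)).
  pose proof (dispersion_pos_lt_id h x hh hx).
  pose proof (dispersion_pos_lt_id h y hh hy).
  nra.
Qed.

Lemma triad_beta_neg a b K1 K2 K3 : 0 < a -> 0 < b ->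
  (a + b) ^ 4 - a ^ 4 < 2 * (K3 ^ 2 - K1 ^ 2) ->
  (a + b) ^ 4 - b ^ 4 < 2 * (K3 ^ 2 - K2 ^ 2) ->
  (a * K1 ^ 2 + b * K2 ^ 2 + - (a + b) * K3 ^ 2)
    - / 2 * a * b * - (a + b) * (a ^ 2 + b ^ 2 + (- (a + b)) ^ 2) < 0.
Proof.
  intros ha hb h1 h2.
  assert (hbeta : (a * K1 ^ 2 + b * K2 ^ 2 + - (a + b) * K3 ^ 2)
      - / 2 * a * b * - (a + b) * (a ^ 2 + b ^ 2 + (- (a + b)) ^ 2)
    = - (a * (K3 ^ 2 - K1 ^ 2) + b * (K3 ^ 2 - K2 ^ 2))
      + (a * ((a + b) ^ 4 - a ^ 4) + b * ((a + b) ^ 4 - b ^ 4)) / 5) by field.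
  rewrite hbeta.
  assert (0 < (a + b) ^ 4 - a ^ 4).
  { replace ((a + b) ^ 4 - a ^ 4) with (b * (2 * a + b) * ((a + b) ^ 2 + a ^ 2)) by ring.
    apply Rmult_lt_0_compat; nra. }
  assert (0 < (a + b) ^ 4 - b ^ 4).
  { replace ((a + b) ^ 4 - b ^ 4) with (a * (a + 2 * b) * ((a + b) ^ 2 + b ^ 2)) by ring.
    apply Rmult_lt_0_compat; nra. }
  nra.
Qed.

Theorem mainTheorem2 (K1 K2 K3 hc : R)
  (hK1 : 0 < K1) (hK2 : 0 < K2) (hK3 : 0 < K3) (hhc : 0 < hc) :
  let L1 := K1 * tanh (K1 * hc) in
  let L2 := K2 * tanh (K2 * hc) in
  let L3 := K3 * tanh (K3 * hc) in
  let O1 := sqrt L1 in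
  let O2 := sqrt L2 in
  let O3 := - sqrt L3 in
  O1 + O2 + O3 = 0 ->
  let beta := (O1 * K1 ^ 2 + O2 * K2 ^ 2 + O3 * K3 ^ 2)
              - / 2 * O1 * O2 * O3 * (O1 ^ 2 + O2 ^ 2 + O3 ^ 2) in
  beta < 0.
Proof.
  intros L1 L2 L3 O1 O2 O3 hres beta.
  unfold beta, O1, O2, O3, L1, L2, L3 in *.
  change (K1 * tanh (K1 * hc)) with (dispersion hc K1) in *.
  change (K2 * tanh (K2 * hc)) with (dispersion hc K2) in *.
  change (K3 * tanh (K3 * hc)) with (dispersion hc K3) in *.
  pose proof (dispersion_pos_lt_id hc K1 hhc hK1).
  pose proof (dispersion_pos_lt_id hc K2 hhc hK2).
  pose proof (dispersion_pos_lt_id hc K3 hhc hK3).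
  assert (ha : 0 < sqrt (dispersion hc K1)) by (apply sqrt_lt_R0; lra).
  assert (hb : 0 < sqrt (dispersion hc K2)) by (apply sqrt_lt_R0; lra).
  assert (hres3 : sqrt (dispersion hc K3)
                  = sqrt (dispersion hc K1) + sqrt (dispersion hc K2)) by lra.
  assert (gap : forall K, 0 < K ->
      sqrt (dispersion hc K) < sqrt (dispersion hc K3) ->
      sqrt (dispersion hc K3) ^ 4 - sqrt (dispersion hc K) ^ 4 < 2 * (K3 ^ 2 - K ^ 2)).
  { intros K hK hlt.
    pose proof (dispersion_pos_lt_id hc K hhc hK).
    rewrite !sqrt_pow4 by lra.
    apply dispersion_sq_sub_lt; [assumption .. |].
    now apply sqrt_lt_0_alt. }
  rewrite hres3.
  apply triad_beta_neg; [exact ha | exact hb | |]; rewrite <- hres3; apply gap; lra.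
Qed.
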